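(* Let $\mathcal{E},\mathcal{E}'$ be coarse structures on a set $X$ such that $\delta_{(X,\mathcal{E})}=\delta_{(X,\mathcal{E}')}$. Then $so(X,\mathcal{E})=so(X,\mathcal{E}')$.
   Context: A ballean $(X,\mathcal{E})$ is a set with a coarse structure. $E[x]=\{y:(x,y)\in E\}$, $E[A]=\bigcup_{a\in A}E[a]$. $Y$ is bounded if $Y\subseteq E[x]$ for some $x$ and $E\in\mathcal{E}$. For subsets $A,B\subseteq X$, $A\,\delta_{(X,\mathcal{E})}\,B$ means there is $E\in\mathcal{E}$ with $A\subseteq E[B]$ and $B\subseteq E[A]$. A function $f:X\to\mathbb{R}$ is slowly oscillating if for every $E\in\mathcal{E}$ and $\varepsilon>0$ there is a bounded $B$ with $\operatorname{diam} f(E[x])<\varepsilon$ for all $x\in X\setminus B$; $so(X,\mathcal{E})$ denotes the set of bounded slowly oscillating functions $X\to\mathbb{R}$. *)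

From Stdlib Require Import Reals.
Open Scope R_scope.

(* Entourages (subsets of X x X) as relations. *)
Definition rel (X : Type) := X -> X -> Prop.

Definition diag {X : Type} : rel X := fun x y => x = y.
Definition rel_inv {X : Type} (E : rel X) : rel X := fun x y => E y x.
Definition rel_comp {X : Type} (E F : rel X) : rel X :=
  fun x z => exists y, E x y /\ F y z.
Definition rel_union {X : Type} (E F : rel X) : rel X := fun x y => E x y \/ F x y.
Definition rel_sub {X : Type} (E F : rel X) : Prop := forall x y, E x y -> F x y.

Definition coarse_structure {X : Type} (C : rel X -> Prop) : Prop :=
  C diag /\
  (forall E F, C E -> rel_sub F E -> C F) /\
  (forall E F, C E -> C F -> C (rel_union E F)) /\
  (forall E, C E -> C (rel_inv E)) /\
  (forall E F, C E -> C F -> C (rel_comp E F)).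

(* Balls: E[x] = {y | (x,y) in E}, E[A] = union of E[a], a in A. *)
Definition ball {X : Type} (E : rel X) (x : X) : X -> Prop := fun y => E x y.
Definition ball_set {X : Type} (E : rel X) (A : X -> Prop) : X -> Prop :=
  fun y => exists a, A a /\ E a y.

Definition subset {X : Type} (A B : X -> Prop) : Prop := forall x, A x -> B x.

Definition bounded {X : Type} (C : rel X -> Prop) (Y : X -> Prop) : Prop :=
  exists x E, C E /\ subset Y (ball E x).

Definition delta {X : Type} (C : rel X -> Prop) (A B : X -> Prop) : Prop :=
  exists E, C E /\ subset A (ball_set E B) /\ subset B (ball_set E A).

(* diam f(S) < eps  (diameter = sup of pairwise distances, 0 if S empty). *)
Definition diam_lt {X : Type} (f : X -> R) (S : X -> Prop) (eps : R) : Prop :=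
  exists d, d < eps /\ forall y z, S y -> S z -> Rabs (f y - f z) <= d.

Definition slowly_oscillating {X : Type} (C : rel X -> Prop) (f : X -> R) : Prop :=
  forall E eps, C E -> 0 < eps ->
    exists B, bounded C B /\
      forall x, ~ B x -> diam_lt f (ball E x) eps.

Definition bounded_fun {X : Type} (f : X -> R) : Prop :=
  exists M, forall x, Rabs (f x) <= M.

Definition so {X : Type} (C : rel X -> Prop) (f : X -> R) : Prop :=
  bounded_fun f /\ slowly_oscillating C f.

(* Both boundedness and the oscillation of f are expressible through delta.
   A nonempty bounded set is delta-related to a point, so the two structures
   have the same bounded sets.  Given an entourage E' of the second structure
   and a level s, the points z with f z <= s that share an E'-ball with some
   y with f y >= s + h are delta-related to the set of those y; transported
   to the first structure, this puts every such z within one entourage of a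
   point where f is larger by h, so these z form a bounded set since f is
   slowly oscillating there.  As f is bounded, finitely many levels s at
   mesh h suffice (their entourages are merged into one), and every point
   where f oscillates by more than 2h on its E'-ball lies in an E'-ball
   meeting that bounded set. *)

From Pilot Require Import Defs.
From Stdlib Require Import Reals Lra Lia Classical ZArith.
Open Scope R_scope.

Lemma ball_set_mono {X : Type} (E F : rel X) (A : X -> Prop) :
  rel_sub E F -> subset (ball_set E A) (ball_set F A).
Proof. intros HEF y [a [Ha Hay]]. exists a. auto. Qed.

Lemma coarse_common_entourage {X : Type} (C : rel X -> Prop) (A B : nat -> X -> Prop) :
  coarse_structure C ->
  (forall k, exists E, C E /\ subset (A k) (ball_set E (B k))) ->
  forall n, exists E, C E /\
    forall k, (k < n)%nat -> subset (A k) (ball_set E (B k)).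
Proof.
  intros [Cdiag [_ [Cunion _]]] HAB n.
  induction n as [|n [E [HE HEk]]].
  - exists diag. split; [exact Cdiag | intros k Hk; lia].
  - destruct (HAB n) as [F [HF HFn]].
    exists (rel_union E F). split; [now apply Cunion|].
    intros k Hk. destruct (Nat.eq_dec k n) as [->|Hne].
    + intros z Hz. apply (ball_set_mono F); [now right | now apply HFn].
    + intros z Hz. apply (ball_set_mono E); [now left | apply HEk; [lia | exact Hz]].
Qed.

Lemma delta_point_of_bounded {X : Type} (C : rel X -> Prop) (Y : X -> Prop) x E y0 :
  coarse_structure C -> C E -> subset Y (ball E x) -> Y y0 ->
  delta C Y (fun a => a = x).
Proof.
  intros [_ [_ [Cunion [Cinv _]]]] HE HY Hy0.
  exists (rel_union E (rel_inv E)). split; [now apply Cunion, Cinv|split].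
  - intros y Hy. exists x. split; [reflexivity | left; now apply HY].
  - intros a ->. exists y0. split; [exact Hy0 | right; now apply HY].
Qed.

Lemma bounded_of_delta_point {X : Type} (C : rel X -> Prop) (Y : X -> Prop) x :
  delta C Y (fun a => a = x) -> Defs.bounded C Y.
Proof.
  intros [F [HF [HYF _]]]. exists x, F. split; [exact HF|].
  intros y Hy. destruct (HYF y Hy) as [a [-> Ha]]. exact Ha.
Qed.

Lemma bounded_of_delta_sub {X : Type} (C C' : rel X -> Prop) :
  coarse_structure C -> coarse_structure C' ->
  (forall A B, delta C A B -> delta C' A B) ->
  forall Y, Defs.bounded C Y -> Defs.bounded C' Y.
Proof.
  intros hC [C'diag _] hd Y [x [E [HE HY]]].
  destruct (classic (exists y0, Y y0)) as [[y0 Hy0]|Hempty].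
  - apply (bounded_of_delta_point C' Y x), hd.
    exact (delta_point_of_bounded C Y x E y0 hC HE HY Hy0).
  - exists x, diag. split; [exact C'diag|].
    intros y Hy. exfalso. eauto.
Qed.

Lemma slowly_oscillating_near {X : Type} (C : rel X -> Prop) (f : X -> R) :
  coarse_structure C -> slowly_oscillating C f ->
  forall E h, C E -> 0 < h ->
  exists B, Defs.bounded C B /\ forall y z, E y z -> ~ B z -> Rabs (f y - f z) < h.
Proof.
  intros [Cdiag [_ [Cunion [Cinv _]]]] Hso E h HE Hh.
  destruct (Hso (rel_union (rel_inv E) diag) h) as [B [HB Hdiam]];
    [now apply Cunion; [apply Cinv|] | exact Hh |].
  exists B. split; [exact HB|].
  intros y z Hyz HBz. destruct (Hdiam z HBz) as [d [Hd Hf]].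
  assert (Hzz : ball (rel_union (rel_inv E) diag) z z) by now right.
  assert (Hzy : ball (rel_union (rel_inv E) diag) z y) by now left.
  specialize (Hf y z Hzy Hzz). lra.
Qed.

Definition jump {X : Type} (E : rel X) (f : X -> R) (s h : R) (x y z : X) : Prop :=
  E x y /\ E x z /\ f z <= s /\ s + h <= f y.

Definition jump_low {X : Type} (E : rel X) (f : X -> R) (s h : R) (z : X) : Prop :=
  exists x y, jump E f s h x y z.

Definition jump_high {X : Type} (E : rel X) (f : X -> R) (s h : R) (y : X) : Prop :=
  exists x z, jump E f s h x y z.

Lemma delta_jump_low_high {X : Type} (C : rel X -> Prop) E f s h :
  coarse_structure C -> C E -> delta C (jump_low E f s h) (jump_high E f s h).
Proof.
  intros [_ [_ [_ [Cinv Ccomp]]]] HE.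
  exists (rel_comp (rel_inv E) E). split; [now apply Ccomp, HE; apply Cinv|split].
  - intros z [x [y Hj]]. exists y. split; [now exists x, z|].
    destruct Hj as [Hxy [Hxz _]]. now exists x.
  - intros y [x [z Hj]]. exists z. split; [now exists x, y|].
    destruct Hj as [Hxy [Hxz _]]. now exists x.
Qed.

Lemma grid_cover (M h : R) :
  0 < h -> exists N, forall t, Rabs t <= M ->
    exists k, (k < N)%nat /\ t < -M + INR k * h <= t + h.
Proof.
  intros Hh.
  exists (Z.to_nat (up (2 * M / h + 2))). intros t Ht.
  assert (Ht' : - M <= t <= M)
    by (pose proof (Rle_abs t); pose proof (Rle_abs (- t)); rewrite Rabs_Ropp in *; lra).
  set (r := (t + M) / h).
  assert (Hr0 : 0 <= r) by (apply Rmult_le_pos; [lra | left; apply Rinv_0_lt_compat, Hh]).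
  assert (Hrh : r * h = t + M) by (unfold r; field; lra).
  assert (Hr2 : r <= 2 * M / h).
  { apply (Rmult_le_reg_r h); [exact Hh|]. unfold Rdiv.
    rewrite Rmult_assoc, Rinv_l; lra. }
  destruct (archimed r) as [Hup1 Hup2].
  destruct (archimed (2 * M / h + 2)) as [HupN _].
  exists (Z.to_nat (up r)).
  assert (Hk : INR (Z.to_nat (up r)) = IZR (up r)).
  { rewrite INR_IZR_INZ, Z2Nat.id; [reflexivity|]. apply le_IZR. lra. }
  split.
  - apply INR_lt. rewrite Hk, INR_IZR_INZ, Z2Nat.id; [lra|]. apply le_IZR. lra.
  - rewrite Hk. split; nra.
Qed.

Lemma slowly_oscillating_of_delta_sub {X : Type} (C C' : rel X -> Prop) (f : X -> R) :
  coarse_structure C -> coarse_structure C' ->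
  (forall A B, delta C' A B -> delta C A B) ->
  (forall Y, Defs.bounded C Y -> Defs.bounded C' Y) ->
  bounded_fun f -> slowly_oscillating C f -> slowly_oscillating C' f.
Proof.
  intros hC hC' hd hb [M HM] Hso E' eps HE' Heps.
  set (h := eps / 4). assert (Hh : 0 < h) by (unfold h; lra).
  destruct (grid_cover M h Hh) as [N Hgrid].
  set (s := fun k : nat => -M + INR k * h).
  destruct (coarse_common_entourage C (fun k => jump_low E' f (s k) h)
              (fun k => jump_high E' f (s k) h) hC) with (n := N) as [E [HE HEk]].
  { intro k. destruct (hd _ _ (delta_jump_low_high C' E' f (s k) h hC' HE'))
      as [E [HE [Hsub _]]]. now exists E. }
  destruct (slowly_oscillating_near C f hC Hso E h HE Hh) as [B [HB Hnear]].
  assert (Hlow : forall k, (k < N)%nat -> subset (jump_low E' f (s k) h) B).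
  { intros k Hk z Hz. apply NNPP. intro HBz.
    destruct (HEk k Hk z Hz) as [y [[_ [_ [_ [_ [_ Hy]]]]] Hyz]].
    destruct Hz as [_ [_ [_ [_ [Hz _]]]]].
    destruct (Rabs_def2 _ _ (Hnear y z Hyz HBz)). lra. }
  destruct (hb B HB) as [x0 [G [HG HBG]]].
  destruct hC' as [_ [_ [_ [C'inv C'comp]]]].
  exists (fun x => exists y z, E' x y /\ E' x z /\ 2 * h < f y - f z). split.
  - exists x0, (rel_comp G (rel_inv E')). split; [now apply C'comp, C'inv|].
    intros x [y [z [Hxy [Hxz Hyz]]]].
    destruct (Hgrid (f z) (HM z)) as [k [Hk Hsk]].
    exists z. split; [|exact Hxz].
    apply HBG, (Hlow k Hk). exists x, y.
    unfold jump, s in *. repeat split; auto; lra.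
  - intros x Hx. exists (2 * h). split; [unfold h; lra|].
    intros a b Ha Hb. apply Rabs_le. split; apply Rnot_lt_le; intro Hlt;
      apply Hx; [exists b, a | exists a, b]; repeat split; auto; lra.
Qed.

Theorem mainTheorem10 (X : Type) (C C' : rel X -> Prop)
  (hC : coarse_structure C) (hC' : coarse_structure C')
  (hdelta : forall A B : X -> Prop, delta C A B <-> delta C' A B) :
  forall f : X -> R, so C f <-> so C' f.
Proof.
  intro f. split; intros [Hbf Hso]; split; try exact Hbf.
  - apply (slowly_oscillating_of_delta_sub C C'); auto.
    + intros A B. apply hdelta.
    + apply bounded_of_delta_sub; auto. intros A B. apply hdelta.
  - apply (slowly_oscillating_of_delta_sub C' C); auto.
    + intros A B. apply hdelta.
    + apply bounded_of_delta_sub; auto. intros A B. apply hdelta.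
Qed.
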